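(* Let $m\in\mathcal{P}(\mathcal{S})$ be such that $Q^d(m)$ is irreducible for all $d\in D^s$, and let $\mathcal{D}(m)=\{d_1,\dots,d_n\}$. For each $k$, let $x^{d_k}(m)$ be the unique $x\in\mathcal{P}(\mathcal{S})$ with $0=\sum_{i\in\mathcal{S}}\sum_{a\in\mathcal{A}}x_iQ_{ija}(m)(d_k)_{ia}$ for all $j\in\mathcal{S}$. Then $$\phi(m)=\operatorname{conv}\big(x^{d_1}(m),\dots,x^{d_n}(m)\big).$$
   Context: Setting: $\mathcal{S}=\{1,\dots,S\}$ ($S>1$), $\mathcal{A}=\{1,\dots,A\}$; for each $a$, $m$, $(Q_{ija}(m))_{i,j}$ is a conservative generator (off-diagonal $\ge 0$, zero row sums); $m\mapsto Q_{ija}(m)$ Lipschitz, $m\mapsto r_{ia}(m)$ continuous; $\beta\in(0,1)$. $\Pi^s$: stationary strategies (matrices $(\pi_{ia})$ with rows in $\mathcal{P}(\mathcal{A})$); $D^s$: deterministic stationary strategies, identified with maps $d:\mathcal{S}\to\mathcal{A}$ via $d_{ia}=\mathbf{1}[a=d(i)]$. $Q^\pi(m)_{ij}=\sum_aQ_{ija}(m)\pi_{ia}$. $V^\ast(m)$: value function of the continuous-time MDP with rates $Q_{ija}(m)$, rewards $r_{ia}(m)$, discount rate $\beta$. $O_i(m)=\operatorname{argmax}_{a}\{r_{ia}(m)+\sum_jQ_{ija}(m)V^\ast_j(m)\}$, $\mathcal{D}(m)=\{d:\mathcal{S}\to\mathcal{A}: d(i)\in O_i(m)\ \forall i\}$.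 Best-response map: $\phi(m)=\{x\in\mathcal{P}(\mathcal{S}):\exists\,\pi\in\operatorname{conv}(\mathcal{D}(m)),\ x^TQ^\pi(m)=0\}$. Irreducible: the directed graph with edges $i\to j$ ($i\ne j$) where the entry is positive is strongly connected. *)

From HB Require Import structures.
From mathcomp Require Import all_boot all_order all_algebra.
Set Implicit Arguments. Unset Strict Implicit. Unset Printing Implicit Defensive.
Import Order.TTheory GRing.Theory Num.Theory.
Local Open Scope ring_scope.

(* States are 'I_S, actions 'I_A.  Q a i j  stands for Q_{ija}. *)

Definition simplex {R : realFieldType} {n : nat} (x : 'rV[R]_n) : Prop :=
  (forall i, 0 <= x 0 i) /\ \sum_i x 0 i = 1.

Definition generator {R : realFieldType} {n : nat} (M : 'M[R]_n) : Prop :=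
  (forall i j, i != j -> 0 <= M i j) /\ (forall i, \sum_j M i j = 0).

Definition irreducible {R : realFieldType} {n : nat} (M : 'M[R]_n) : Prop :=
  forall i j : 'I_n, connect [rel k l | (k != l) && (0 < M k l)] i j.

Definition stat_strategy {R : realFieldType} {S A : nat} (pi : 'M[R]_(S, A)) : Prop :=
  forall i, simplex (row i pi).

Definition det_mx {R : realFieldType} {S A : nat} (d : {ffun 'I_S -> 'I_A}) : 'M[R]_(S, A) :=
  \matrix_(i, a) (a == d i)%:R.

Definition Qpol {R : realFieldType} {S A : nat} (Q : 'I_A -> 'M[R]_S) (pi : 'M[R]_(S, A))
  : 'M[R]_S := \matrix_(i, j) \sum_a Q a i j * pi i a.

Definition rpol {R : realFieldType} {S A : nat} (r : 'I_S -> 'I_A -> R) (pi : 'M[R]_(S, A))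
  : 'cV[R]_S := \col_i \sum_a r i a * pi i a.

(* expected discounted reward of the stationary strategy pi:
   E int_0^oo e^{-beta t} r(X_t) dt = (beta I - Q^pi)^{-1} r^pi *)
Definition Vpol {R : realFieldType} {S A : nat} (beta : R) (Q : 'I_A -> 'M[R]_S)
  (r : 'I_S -> 'I_A -> R) (pi : 'M[R]_(S, A)) : 'cV[R]_S :=
  invmx (beta%:M - Qpol Q pi) *m rpol r pi.

Definition is_value_fn {R : realFieldType} {S A : nat} (beta : R) (Q : 'I_A -> 'M[R]_S)
  (r : 'I_S -> 'I_A -> R) (V : 'cV[R]_S) : Prop :=
  forall i,
    (forall pi : 'M[R]_(S, A), stat_strategy pi -> Vpol beta Q r pi i 0 <= V i 0) /\
    (forall eps, 0 < eps -> exists pi : 'M[R]_(S, A),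
        stat_strategy pi /\ V i 0 - eps < Vpol beta Q r pi i 0).

Definition opt_action {R : realFieldType} {S A : nat} (Q : 'I_A -> 'M[R]_S)
  (r : 'I_S -> 'I_A -> R) (V : 'cV[R]_S) (i : 'I_S) (a : 'I_A) : bool :=
  [forall b, r i b + \sum_j Q b i j * V j 0 <= r i a + \sum_j Q a i j * V j 0].

Definition opt_dets {R : realFieldType} {S A : nat} (Q : 'I_A -> 'M[R]_S)
  (r : 'I_S -> 'I_A -> R) (V : 'cV[R]_S) : {set {ffun 'I_S -> 'I_A}} :=
  [set d : {ffun 'I_S -> 'I_A} | [forall i, opt_action Q r V i (d i)]].

Definition in_conv_pol {R : realFieldType} {S A : nat} (D : {set {ffun 'I_S -> 'I_A}})
  (pi : 'M[R]_(S, A)) : Prop :=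
  exists c : {ffun {ffun 'I_S -> 'I_A} -> R},
    (forall d, 0 <= c d) /\ \sum_(d in D) c d = 1 /\
    pi = \sum_(d in D) c d *: det_mx d.

Definition best_response {R : realFieldType} {S A : nat} (Q : 'I_A -> 'M[R]_S)
  (r : 'I_S -> 'I_A -> R) (V : 'cV[R]_S) (x : 'rV[R]_S) : Prop :=
  simplex x /\ exists pi, in_conv_pol (opt_dets Q r V) pi /\ x *m Qpol Q pi = 0.

Definition stat_dist {R : realFieldType} {S A : nat} (Q : 'I_A -> 'M[R]_S)
  (d : {ffun 'I_S -> 'I_A}) (x : 'rV[R]_S) : Prop :=
  simplex x /\ x *m Qpol Q (det_mx d) = 0.

From HB Require Import structures.
From mathcomp Require Import all_boot all_order all_algebra.
Set Implicit Arguments.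
Unset Strict Implicit.
Unset Printing Implicit Defensive.
Import Order.TTheory GRing.Theory Num.Theory.
Local Open Scope ring_scope.

(* For an irreducible generator, a nonnegative invariant row vector that vanishes at one
   state vanishes everywhere; this makes stationary distributions positive and unique, and
   existence comes from the absolute value of a left kernel vector.
   If x is stationary for a strategy pi mixing optimal actions, replace row i of pi by a
   pure action a and let z_a be the stationary distribution of the result: then x is the
   convex combination of the z_a with weights proportional to pi_ia / z_a(i), so purifying
   the rows one at a time puts x in the convex hull of the x^d.  Conversely, a convex
   combination x = sum_d c_d x^d is stationary for pi_ia = sum_d c_d x^d_i [d(i) = a] / x_i,
   a strategy mixing optimal actions only. *)

Section StationaryDistribution.
Context {R : realFieldType} {n : nat}.
Implicit Types (M : 'M[R]_n) (v x y : 'rV[R]_n).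

Lemma simplex_has_pos x : simplex x -> exists k, 0 < x 0 k.
Proof.
case=> _ x_sum1; have [k x_k_pos | x_le0] := pickP (fun k => 0 < x 0 k).
  by exists k.
suff : \sum_k x 0 k <= 0 by rewrite x_sum1 ler10.
by apply: sumr_le0 => k _; rewrite leNgt x_le0.
Qed.

Lemma generator_diag_le0 M : generator M -> forall j, M j j <= 0.
Proof.
case=> M_offdiag M_sum0 j; move/eqP: (M_sum0 j); rewrite (bigD1 j) //= addr_eq0.
by move/eqP->; rewrite oppr_le0 sumr_ge0 // => k k_neq_j; rewrite M_offdiag // eq_sym.
Qed.

Lemma generator_sum_mulmx M x : generator M -> \sum_j (x *m M) 0 j = 0.
Proof.
case=> _ M_sum0; under eq_bigr do rewrite mxE.
by rewrite exchange_big big1 // => i _; rewrite -mulr_sumr M_sum0 mulr0.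
Qed.

Lemma stationary_edge_pos M x i j :
  generator M -> (forall k, 0 <= x 0 k) -> x *m M = 0 ->
  i != j -> 0 < M i j -> 0 < x 0 i -> 0 < x 0 j.
Proof.
case=> M_offdiag _ x_ge0 xM0 i_neq_j M_ij_pos x_i_pos.
rewrite lt_def x_ge0 andbT; apply/eqP => x_j0.
have : (x *m M) 0 j = 0 by rewrite xM0 mxE.
rewrite mxE (bigD1 j) //= x_j0 mul0r add0r => /eqP.
rewrite psumr_eq0 => [/allP/(_ i (mem_index_enum _))|k k_neq_j].
  by rewrite i_neq_j mulf_eq0 !gt_eqF.
by rewrite mulr_ge0 // M_offdiag.
Qed.

Lemma irreducible_stationary_pos M x k :
  generator M -> irreducible M -> (forall i, 0 <= x 0 i) -> x *m M = 0 ->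
  0 < x 0 k -> forall i, 0 < x 0 i.
Proof.
move=> M_gen M_irr x_ge0 xM0 x_k_pos i; have /connectP[p p_path ->] := M_irr k i.
elim: p k x_k_pos p_path => //= l p IHp k x_k_pos /andP[/andP[k_neq_l M_kl_pos] p_path].
exact: IHp (stationary_edge_pos M_gen x_ge0 xM0 k_neq_l M_kl_pos x_k_pos) p_path.
Qed.

Lemma irreducible_simplex_stationary_pos M x :
  generator M -> irreducible M -> simplex x -> x *m M = 0 -> forall i, 0 < x 0 i.
Proof.
move=> M_gen M_irr x_simplex xM0; have [k x_k_pos] := simplex_has_pos x_simplex.
exact: irreducible_stationary_pos M_gen M_irr (proj1 x_simplex) xM0 x_k_pos.
Qed.

Lemma irreducible_stationary_unique M x y :
  generator M -> irreducible M -> simplex x -> simplex y ->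
  x *m M = 0 -> y *m M = 0 -> x = y.
Proof.
move=> M_gen M_irr x_simplex y_simplex xM0 yM0.
have y_pos := irreducible_simplex_stationary_pos M_gen M_irr y_simplex yM0.
have [k0 _] := simplex_has_pos y_simplex.
(* [t] is the largest multiple of [y] below [x]; the remainder vanishes somewhere. *)
have [k _ ratio_min] := arg_minP (fun i => x 0 i / y 0 i) (isT : xpredT k0).
set t := x 0 k / y 0 k; set w := x - t *: y.
have w_ge0 i : 0 <= w 0 i.
  by rewrite !mxE subr_ge0 -ler_pdivlMr ?ratio_min.
have wM0 : w *m M = 0 by rewrite mulmxBl -scalemxAl xM0 yM0 scaler0 subr0.
have w_k0 : w 0 k = 0 by rewrite !mxE divfK ?subrr ?gt_eqF.
have w0 : w = 0.
  apply/rowP => i; rewrite [RHS]mxE; apply/eqP; apply: contraT => w_i_neq0.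
  have w_i_pos : 0 < w 0 i by rewrite lt_def w_i_neq0 w_ge0.
  by have := irreducible_stationary_pos M_gen M_irr w_ge0 wM0 w_i_pos k; rewrite w_k0 ltxx.
have x_eq : x = t *: y by apply/eqP; rewrite -subr_eq0 -/w w0.
suff t1 : t = 1 by rewrite x_eq t1 scale1r.
have := proj2 x_simplex; rewrite x_eq.
by under eq_bigr do rewrite mxE; rewrite -mulr_sumr (proj2 y_simplex) mulr1.
Qed.

Lemma generator_stationary_abs M v :
  generator M -> v *m M = 0 -> map_mx (fun a => `|a|) v *m M = 0.
Proof.
move=> M_gen vM0; have [M_offdiag _] := M_gen.
set u := map_mx (fun a => `|a|) v.
have uM_ge0 j : 0 <= (u *m M) 0 j.
  have : (v *m M) 0 j = 0 by rewrite vM0 mxE.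
  rewrite mxE (bigD1 j) //= => /eqP; rewrite addr_eq0 => /eqP v_jj.
  rewrite mxE (bigD1 j) //= /u mxE -[M j j]opprK -(ler0_norm (generator_diag_le0 M_gen j)).
  rewrite mulrN -normrM v_jj normrN addrC subr_ge0 (le_trans (ler_norm_sum _ _ _)) //.
  by apply: ler_sum => i i_neq_j; rewrite mxE normrM (ger0_norm (M_offdiag _ _ i_neq_j)).
apply/rowP => j; rewrite [RHS]mxE; apply/eqP.
move/eqP: (generator_sum_mulmx u M_gen).
by rewrite psumr_eq0 // => /allP/(_ j (mem_index_enum _)).
Qed.

Lemma generator_stationary_exists M :
  (0 < n)%N -> generator M -> exists x, simplex x /\ x *m M = 0.
Proof.
move=> n_gt0 M_gen; have [_ M_sum0] := M_gen.
have [v v_neq0 vM0] : exists2 v : 'rV[R]_n, v != 0 & v *m M = 0.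
  apply/det0P; rewrite -det_tr; apply/det0P; exists (const_mx 1).
    by apply/eqP => /rowP/(_ (Ordinal n_gt0)); rewrite !mxE => /eqP; rewrite oner_eq0.
  apply/rowP => j; rewrite mxE [RHS]mxE -[RHS](M_sum0 j).
  by apply: eq_bigr => i _; rewrite !mxE mul1r.
set u := map_mx (fun a => `|a|) v.
have uM0 : u *m M = 0 := generator_stationary_abs M_gen vM0.
have u_ge0 i : 0 <= u 0 i by rewrite mxE.
have u_sum_pos : 0 < \sum_i u 0 i.
  rewrite lt_def sumr_ge0 // andbT psumr_eq0 //; apply: contra v_neq0 => /allP u0.
  by apply/eqP/rowP => i; move: (u0 i (mem_index_enum _)); rewrite !mxE normr_eq0 => /eqP.
exists ((\sum_i u 0 i)^-1 *: u); split; last by rewrite -scalemxAl uM0 scaler0.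
split=> [i|]; first by rewrite mxE mulr_ge0 // invr_ge0 ltW.
by under eq_bigr do rewrite mxE; rewrite -mulr_sumr mulVf ?gt_eqF.
Qed.

End StationaryDistribution.

Section ConvexHull.
Context {R : realFieldType}.

Definition in_hull {I : finType} {V : lmodType R} (D : {set I}) (y : I -> V) (x : V) : Prop :=
  exists c : {ffun I -> R},
    (forall i, 0 <= c i) /\ \sum_(i in D) c i = 1 /\ x = \sum_(i in D) c i *: y i.

Lemma in_hull_mem {I : finType} {V : lmodType R} (D : {set I}) (y : I -> V) i :
  i \in D -> in_hull D y (y i).
Proof.
move=> i_in_D; exists [ffun j => (j == i)%:R]; split=> [j|]; first by rewrite ffunE ler0n.
have other_j0 j : (j \in D) && (j != i) -> [ffun j => (j == i)%:R] j = 0 :> R.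
  by case/andP=> _ /negbTE j_neq_i; rewrite ffunE j_neq_i.
split; first by rewrite (bigD1 i) //= big1 // ffunE eqxx addr0.
rewrite (bigD1 i) //= big1 ?ffunE ?eqxx ?scale1r ?addr0 // => j /other_j0->.
by rewrite scale0r.
Qed.

Lemma in_hull_trans {I J : finType} {V : lmodType R} (E : {set J}) (z : J -> V)
    (D : {set I}) (y : I -> V) x :
  in_hull E z x -> (forall j, j \in E -> in_hull D y (z j)) -> in_hull D y x.
Proof.
move=> [lam [lam_ge0 [lam_sum1 ->]]] z_in_hull.
have /fin_all_exists[c c_hull] : forall j, exists c : {ffun I -> R}, j \in E ->
    (forall i, 0 <= c i) /\ \sum_(i in D) c i = 1 /\ z j = \sum_(i in D) c i *: y i.
  move=> j; have [/z_in_hull[c c_props]|_] := boolP (j \in E); first by exists c.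
  by exists 0.
exists [ffun i => \sum_(j in E) lam j * c j i]; split; [|split].
- move=> i; rewrite ffunE sumr_ge0 // => j /c_hull[c_ge0 _]; exact: mulr_ge0.
- under eq_bigr do rewrite ffunE; rewrite exchange_big /= -lam_sum1.
  by apply: eq_bigr => j /c_hull[_ [c_sum1 _]]; rewrite -mulr_sumr c_sum1 mulr1.
- under [RHS]eq_bigr do rewrite ffunE scaler_suml; rewrite [RHS]exchange_big /=.
  apply: eq_bigr => j /c_hull[_ [_ ->]]; rewrite scaler_sumr.
  by apply: eq_bigr => i _; rewrite scalerA.
Qed.

Context {I : finType} {n : nat}.
Implicit Types (D : {set I}) (y : I -> 'rV[R]_n) (x : 'rV[R]_n).

Lemma hull_entry D (c : I -> R) y k :
  (\sum_(i in D) c i *: y i) 0 k = \sum_(i in D) c i * y i 0 k.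
Proof. by rewrite summxE; under eq_bigr do rewrite mxE. Qed.

Lemma in_hull_simplex D y x :
  (forall i, i \in D -> simplex (y i)) -> in_hull D y x -> simplex x.
Proof.
move=> y_simplex [c [c_ge0 [c_sum1 ->]]]; split=> [k|].
  by rewrite hull_entry sumr_ge0 // => i /y_simplex[y_ge0 _]; rewrite mulr_ge0.
under eq_bigr do rewrite hull_entry; rewrite exchange_big /= -c_sum1.
by apply: eq_bigr => i /y_simplex[_ y_sum1]; rewrite -mulr_sumr y_sum1 mulr1.
Qed.

Lemma in_hull_pos D y x :
  (forall i, i \in D -> forall k, 0 < y i 0 k) -> in_hull D y x -> forall k, 0 < x 0 k.
Proof.
move=> y_pos [c [c_ge0 [c_sum1 ->]]] k.
have [i /andP[i_in_D c_i_pos]|c_le0] := pickP (fun i => (i \in D) && (0 < c i)); last first.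
  suff : \sum_(i in D) c i <= 0 by rewrite c_sum1 ler10.
  apply: sumr_le0 => i i_in_D; rewrite leNgt.
  by move: (c_le0 i); rewrite /= i_in_D => /negbT.
rewrite hull_entry (bigD1 i) //= ltr_wpDr ?mulr_gt0 ?y_pos //.
by rewrite sumr_ge0 // => j /andP[j_in_D _]; rewrite mulr_ge0 // ltW ?y_pos.
Qed.

End ConvexHull.

Section Strategies.
Context {R : realFieldType} {n A : nat}.
Implicit Types (pi : 'M[R]_(n, A)) (d : {ffun 'I_n -> 'I_A}).

Lemma stat_strategyP pi :
  stat_strategy pi <-> (forall i a, 0 <= pi i a) /\ (forall i, \sum_a pi i a = 1).
Proof.
split=> [pi_stoch|[pi_ge0 pi_sum1] i]; last first.
  by split=> [a|]; [rewrite mxE | under eq_bigr do rewrite mxE].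
split=> [i a|i]; first by have [/(_ a)] := pi_stoch i; rewrite mxE.
by have [_] := pi_stoch i; under eq_bigr do rewrite mxE.
Qed.

Lemma det_mx_stat_strategy d : stat_strategy (det_mx d : 'M[R]_(n, A)).
Proof.
apply/stat_strategyP; split=> [i a|i]; first by rewrite mxE ler0n.
rewrite (bigD1 (d i)) //= big1 ?mxE ?eqxx ?addr0 // => a a_neq.
by rewrite mxE (negbTE a_neq).
Qed.

Lemma pure_strategy_det_mx pi :
  (forall i, exists a, forall b, pi i b = (b == a)%:R) -> exists d, pi = det_mx d.
Proof.
move=> /fin_all_exists[f pi_f]; exists (finfun f).
by apply/matrixP => i b; rewrite pi_f mxE ffunE.
Qed.

Definition fix_action pi i a : 'M[R]_(n, A) :=
  \matrix_(k, b) if k == i then (b == a)%:R else pi k b.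

Lemma fix_action_stat_strategy pi i a :
  stat_strategy pi -> stat_strategy (fix_action pi i a).
Proof.
move=> pi_stoch k; have [->|k_neq_i] := eqVneq k i.
  have -> : row i (fix_action pi i a) = row i (det_mx [ffun=> a]).
    by apply/rowP => b; rewrite !mxE eqxx ffunE.
  exact: det_mx_stat_strategy.
have -> : row k (fix_action pi i a) = row k pi.
  by apply/rowP => b; rewrite !mxE (negbTE k_neq_i).
exact: pi_stoch.
Qed.

Variable Opt : 'I_n -> 'I_A -> bool.
Local Notation D := [set d : {ffun 'I_n -> 'I_A} | [forall i, Opt i (d i)]].

Lemma sum_prod_set (G : 'I_n -> 'I_A -> R) :
  (forall i a, ~~ Opt i a -> G i a = 0) ->
  \sum_(d in D) \prod_i G i (d i) = \prod_i \sum_a G i a.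
Proof.
move=> G_out0; rewrite bigA_distr_bigA big_mkcond /=; apply: eq_bigr => d _.
rewrite inE; case: ifPn => // /forallPn[i /G_out0 G_i0].
by rewrite (bigD1 i) //= G_i0 mul0r.
Qed.

Lemma in_conv_pol_prodP pi :
  in_conv_pol D pi <-> stat_strategy pi /\ (forall i a, 0 < pi i a -> Opt i a).
Proof.
split=> [[c [c_ge0 [c_sum1 ->]]] | [pi_stoch pi_opt]].
  have entry i a :
      (\sum_(d in D) c d *: det_mx d) i a = \sum_(d in D) c d * (a == d i)%:R.
    by rewrite summxE; under eq_bigr do rewrite !mxE.
  split=> [i|i a]; last first.
    rewrite entry; apply: contraTT => not_opt; rewrite -leNgt le_eqVlt big1 ?eqxx // => d.
    rewrite inE => /forallP/(_ i) opt_di.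
    have /negbTE-> : a != d i by apply: contraNneq not_opt => ->.
    by rewrite mulr0.
  split=> [a|]; first by rewrite mxE entry sumr_ge0 // => d _; rewrite mulr_ge0.
  under eq_bigr do rewrite mxE entry; rewrite exchange_big /= -[RHS]c_sum1.
  apply: eq_bigr => d _; rewrite -mulr_sumr (bigD1 (d i)) //= eqxx big1 ?addr0 ?mulr1 //.
  by move=> a /negbTE->.
have /stat_strategyP[pi_ge0 pi_sum1] := pi_stoch.
have pi_out0 i a : ~~ Opt i a -> pi i a = 0.
  move=> not_opt; apply/eqP; rewrite eq_le pi_ge0 leNgt andbT.
  by apply: contra not_opt; exact: pi_opt.
(* Weight each deterministic strategy by the probability of drawing its actions independently. *)
exists [ffun d : {ffun 'I_n -> 'I_A} => \prod_i pi i (d i)].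
split=> [d|]; first by rewrite ffunE prodr_ge0.
split.
  under eq_bigr do rewrite ffunE; rewrite sum_prod_set //.
  by rewrite big1 // => i _; rewrite pi_sum1.
apply/matrixP => i0 a0; rewrite summxE.
pose G i b := pi i b * (if i == i0 then (b == a0)%:R else 1).
have -> : pi i0 a0 = \sum_(d in D) \prod_i G i (d i).
  rewrite sum_prod_set => [|i a /pi_out0 pi_ia0]; last by rewrite /G pi_ia0 mul0r.
  rewrite (bigD1 i0) //= [X in _ * X]big1 => [|i /negbTE i_neq]; last first.
    by rewrite /G i_neq; under eq_bigr do rewrite mulr1; apply: pi_sum1.
  rewrite mulr1 /G eqxx (bigD1 a0) //= eqxx mulr1 big1 ?addr0 // => a /negbTE a_neq.
  by rewrite a_neq mulr0.
apply: eq_bigr => d _; rewrite !mxE ffunE /G big_split /=; congr (_ * _).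
by rewrite -big_mkcond /= big_pred1_eq eq_sym.
Qed.

End Strategies.

Section Policies.
Context {R : realFieldType} {n A : nat} (Q : 'I_A -> 'M[R]_n).
Hypothesis Q_gen : forall a, generator (Q a).
Implicit Types (pi : 'M[R]_(n, A)) (d : {ffun 'I_n -> 'I_A}) (x : 'rV[R]_n).

Lemma Qpol_det_mx d i j : Qpol Q (det_mx d) i j = Q (d i) i j.
Proof.
rewrite mxE (bigD1 (d i)) //= mxE eqxx mulr1 big1 ?addr0 // => a a_neq.
by rewrite mxE (negbTE a_neq) mulr0.
Qed.

Lemma mulmx_Qpol x pi j :
  (x *m Qpol Q pi) 0 j = \sum_i \sum_a x 0 i * pi i a * Q a i j.
Proof.
rewrite mxE; apply: eq_bigr => i _; rewrite mxE mulr_sumr.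
by apply: eq_bigr => a _; rewrite [Q a i j * _]mulrC mulrA.
Qed.

Lemma Qpol_generator pi : (forall i a, 0 <= pi i a) -> generator (Qpol Q pi).
Proof.
move=> pi_ge0; split=> [i j i_neq_j|i].
  rewrite mxE sumr_ge0 // => a _; rewrite mulr_ge0 //; exact: (proj1 (Q_gen a)).
under eq_bigr do rewrite mxE; rewrite exchange_big big1 //= => a _.
by rewrite -mulr_suml (proj2 (Q_gen a)) mul0r.
Qed.

Lemma Qpol_irreducible pi d :
  irreducible (Qpol Q (det_mx d)) -> (forall i a, 0 <= pi i a) ->
  (forall i, 0 < pi i (d i)) -> irreducible (Qpol Q pi).
Proof.
move=> d_irr pi_ge0 pi_d_pos i j; apply: connect_sub (d_irr i j) => k l.
rewrite /= Qpol_det_mx => /andP[k_neq_l Q_pos]; apply: connect1; rewrite /= k_neq_l mxE.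
rewrite (bigD1 (d k)) //= ltr_wpDr ?mulr_gt0 // sumr_ge0 // => a _.
by rewrite mulr_ge0 //; exact: (proj1 (Q_gen a)).
Qed.

Hypothesis Q_irr : forall d, irreducible (Qpol Q (det_mx d)).

Lemma stat_strategy_irreducible pi : stat_strategy pi -> irreducible (Qpol Q pi).
Proof.
move=> pi_stoch; have /stat_strategyP[pi_ge0 _] := pi_stoch.
have /fin_all_exists[f f_pos] : forall i, exists a, 0 < pi i a.
  by move=> i; have [a] := simplex_has_pos (pi_stoch i); rewrite mxE; exists a.
by apply: (Qpol_irreducible (d := finfun f)) => // i; rewrite ffunE.
Qed.

Lemma Qpol_fix_action pi i a k j :
  Qpol Q (fix_action pi i a) k j = if k == i then Q a i j else Qpol Q pi k j.
Proof.
have [->|k_neq_i] := eqVneq k i.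
  rewrite mxE (bigD1 a) //= mxE !eqxx mulr1 big1 ?addr0 // => b b_neq_a.
  by rewrite mxE eqxx (negbTE b_neq_a) mulr0.
by rewrite !mxE; apply: eq_bigr => b _; rewrite mxE (negbTE k_neq_i).
Qed.

Lemma mulmx_Qpol_fix_action x pi i a j :
  (x *m Qpol Q pi) 0 j
  = (x *m Qpol Q (fix_action pi i a)) 0 j + x 0 i * (Qpol Q pi i j - Q a i j).
Proof.
apply/eqP; rewrite addrC -subr_eq; apply/eqP.
rewrite [X in X - _]mxE [X in _ - X]mxE -sumrB (bigD1 i) //= big1 ?addr0.
  by rewrite Qpol_fix_action eqxx mulrBr.
by move=> k /negbTE k_neq_i; rewrite Qpol_fix_action k_neq_i subrr.
Qed.

Lemma stationary_fix_action_in_hull pi i (z : 'I_A -> 'rV[R]_n) x :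
  stat_strategy pi ->
  (forall a, simplex (z a) /\ z a *m Qpol Q (fix_action pi i a) = 0) ->
  simplex x -> x *m Qpol Q pi = 0 -> in_hull [set a | 0 < pi i a] z x.
Proof.
move=> pi_stoch z_stat x_simplex xQ0; have /stat_strategyP[pi_ge0 pi_sum1] := pi_stoch.
set P := [set a | 0 < pi i a].
have pi_out0 a : a \notin P -> pi i a = 0.
  by rewrite inE => a_notpos; apply/eqP; rewrite eq_le pi_ge0 leNgt a_notpos.
have z_i_pos a : 0 < z a 0 i.
  have [z_simplex zQ0] := z_stat a; have fix_stoch := fix_action_stat_strategy i a pi_stoch.
  have /stat_strategyP[fix_ge0 _] := fix_stoch.
  exact: irreducible_simplex_stationary_pos (Qpol_generator fix_ge0)
    (stat_strategy_irreducible fix_stoch) z_simplex zQ0 i.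
have zQ a j : (z a *m Qpol Q pi) 0 j = z a 0 i * (Qpol Q pi i j - Q a i j).
  by rewrite (mulmx_Qpol_fix_action _ _ i a) (proj2 (z_stat a)) mxE add0r.
(* With these weights the row-[i] defects of the [z a *m Q^pi] cancel out. *)
pose mu a := pi i a / z a 0 i.
pose s := \sum_(a in P) mu a.
have s_pos : 0 < s.
  have [a] := simplex_has_pos (pi_stoch i); rewrite mxE => pi_a_pos.
  rewrite /s (bigD1 a) ?inE //= ltr_wpDr ?divr_gt0 // sumr_ge0 // => b _.
  by rewrite divr_ge0 // ltW.
pose c := [ffun a => mu a / s].
have c_hull : in_hull P z (\sum_(a in P) c a *: z a).
  exists c; split=> [a|]; first by rewrite ffunE !divr_ge0 // ltW.
  by split=> //; under eq_bigr do rewrite ffunE; rewrite -mulr_suml mulfV ?gt_eqF.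
suff -> : x = \sum_(a in P) c a *: z a by [].
apply: (irreducible_stationary_unique (Qpol_generator pi_ge0)
  (stat_strategy_irreducible pi_stoch) x_simplex _ xQ0).
  by apply: in_hull_simplex c_hull => a _; exact: (proj1 (z_stat a)).
apply/rowP => j; rewrite mulmx_suml summxE [RHS]mxE.
transitivity (s^-1 * \sum_a pi i a * (Qpol Q pi i j - Q a i j)).
  rewrite mulr_sumr big_mkcond /=; apply: eq_bigr => a _.
  rewrite -scalemxAl mxE zQ ffunE /mu; case: ifPn => [_|/pi_out0->]; last first.
    by rewrite mul0r mulr0.
  by rewrite [pi i a / _ / s]mulrAC mulrA divfK ?gt_eqF // mulrAC mulrC.
under eq_bigr do rewrite mulrBr.
rewrite sumrB -mulr_suml pi_sum1 mul1r [Qpol Q pi i j]mxE.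
by under [X in _ - X]eq_bigr do rewrite mulrC; rewrite subrr mulr0.
Qed.

Section OptimalStrategies.
Variable Opt : 'I_n -> 'I_A -> bool.
Local Notation D := [set d : {ffun 'I_n -> 'I_A} | [forall i, Opt i (d i)]].
Variable y : {ffun 'I_n -> 'I_A} -> 'rV[R]_n.
Hypothesis y_stat : forall d, d \in D -> stat_dist Q d (y d).

Lemma stationary_in_hull_mixed_rows (s : seq 'I_n) pi x :
  stat_strategy pi -> (forall i a, 0 < pi i a -> Opt i a) ->
  (forall i, i \notin s -> exists a, forall b, pi i b = (b == a)%:R) ->
  simplex x -> x *m Qpol Q pi = 0 -> in_hull D y x.
Proof.
elim: s pi x => [|i s IHs] pi x pi_stoch pi_opt pi_pure x_simplex xQ0.
  have [d pi_d] := pure_strategy_det_mx (fun i => pi_pure i isT).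
  have d_in_D : d \in D.
    by rewrite inE; apply/forallP => k; apply: pi_opt; rewrite pi_d mxE eqxx ltr01.
  have [y_simplex yQ0] := y_stat d_in_D; rewrite pi_d in xQ0.
  have d_gen : generator (Qpol Q (det_mx d)) by apply: Qpol_generator => k b; rewrite mxE.
  rewrite (irreducible_stationary_unique d_gen (Q_irr d) x_simplex y_simplex xQ0 yQ0).
  exact: in_hull_mem.
have n_gt0 : (0 < n)%N := leq_ltn_trans (leq0n i) (ltn_ord i).
have /fin_all_exists[z z_stat] a :
    exists z, simplex z /\ z *m Qpol Q (fix_action pi i a) = 0.
  have /stat_strategyP[fix_ge0 _] := fix_action_stat_strategy i a pi_stoch.
  exact: generator_stationary_exists n_gt0 (Qpol_generator fix_ge0).
apply: in_hull_trans (stationary_fix_action_in_hull pi_stoch z_stat x_simplex xQ0) _.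
move=> a; rewrite inE => pi_a_pos; have [z_simplex zQ0] := z_stat a.
apply: IHs z_simplex zQ0; first exact: fix_action_stat_strategy.
  move=> k b; rewrite mxE; case: eqP => [->|_]; last exact: pi_opt.
  case: eqP => [-> _|_]; first exact: pi_opt.
  by rewrite ltxx.
move=> k k_notin_s; have [->|k_neq_i] := eqVneq k i.
  by exists a => b; rewrite mxE eqxx.
have [b0 pi_k] : exists b0, forall b, pi k b = (b == b0)%:R.
  by apply: pi_pure; rewrite in_cons negb_or k_neq_i.
by exists b0 => b; rewrite mxE (negbTE k_neq_i) pi_k.
Qed.

Lemma stationary_in_hull pi x :
  stat_strategy pi -> (forall i a, 0 < pi i a -> Opt i a) ->
  simplex x -> x *m Qpol Q pi = 0 -> in_hull D y x.
Proof.
by move=> pi_stoch pi_opt; apply: (stationary_in_hull_mixed_rows (s := enum 'I_n)) => // i;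
  rewrite mem_enum.
Qed.

Lemma in_hull_stationary x :
  in_hull D y x ->
  exists pi,
    [/\ stat_strategy pi, forall i a, 0 < pi i a -> Opt i a & x *m Qpol Q pi = 0].
Proof.
move=> x_hull; have [c [c_ge0 [_ x_def]]] := x_hull.
have d_gen d : generator (Qpol Q (det_mx d)) by apply: Qpol_generator => k b; rewrite mxE.
have x_pos : forall k, 0 < x 0 k.
  apply: in_hull_pos x_hull => d /y_stat[y_simplex yQ0].
  exact: irreducible_simplex_stationary_pos (d_gen d) (Q_irr d) y_simplex yQ0.
(* [flow k a] is the long-run frequency of being in state [k] and playing [a]. *)
pose flow k a := \sum_(d in D) c d * (y d 0 k * det_mx d k a).
have flow_ge0 k a : 0 <= flow k a.
  by rewrite sumr_ge0 // => d /y_stat[[y_ge0 _] _]; rewrite !mulr_ge0 // mxE.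
have flow_sum k : \sum_a flow k a = x 0 k.
  rewrite x_def hull_entry exchange_big /=; apply: eq_bigr => d _.
  rewrite -!mulr_sumr (bigD1 (d k)) //= mxE eqxx big1 ?addr0 ?mulr1 // => a /negbTE a_neq.
  by rewrite mxE a_neq.
pose pi := \matrix_(k, a) (flow k a / x 0 k).
have flow_eq k a : x 0 k * pi k a = flow k a by rewrite mxE mulrC divfK ?gt_eqF.
exists pi; split.
- apply/stat_strategyP; split=> [k a|k]; first by rewrite mxE divr_ge0 // ltW.
  by under eq_bigr do rewrite mxE; rewrite -mulr_suml flow_sum mulfV ?gt_eqF.
- move=> k a; rewrite mxE; apply: contraTT => not_opt; rewrite -leNgt.
  suff -> : flow k a = 0 by rewrite mul0r.
  apply: big1 => d; rewrite inE => /forallP/(_ k) opt_dk.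
  have /negbTE a_neq : a != d k by apply: contraNneq not_opt => ->.
  by rewrite mxE a_neq !mulr0.
apply/rowP => j; rewrite mulmx_Qpol [RHS]mxE.
under eq_bigr do under eq_bigr do rewrite flow_eq mulr_suml.
under eq_bigr do rewrite exchange_big /=.
rewrite exchange_big /= big1 // => d /y_stat[_ yQ0].
transitivity (c d * (y d *m Qpol Q (det_mx d)) 0 j); last by rewrite yQ0 mxE mulr0.
rewrite mulmx_Qpol !mulr_sumr; apply: eq_bigr => k _; rewrite mulr_sumr.
by apply: eq_bigr => a _; rewrite !mulrA.
Qed.

End OptimalStrategies.

End Policies.

Theorem mainTheorem8 (R : realFieldType) (S A : nat) (hS : (1 < S)%N) (hA : (0 < A)%N)
  (Q : 'rV[R]_S -> 'I_A -> 'M[R]_S) (r : 'rV[R]_S -> 'I_S -> 'I_A -> R) (beta : R)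
  (hgen : forall m, simplex m -> forall a, generator (Q m a))
  (hLip : exists L : R, forall m1 m2, simplex m1 -> simplex m2 ->
     forall a i j, `|Q m1 a i j - Q m2 a i j| <= L * \sum_k `|m1 0 k - m2 0 k|)
  (hcont : forall m0, simplex m0 -> forall eps : R, 0 < eps -> exists delta : R, 0 < delta /\
     forall m1, simplex m1 -> (forall k, `|m1 0 k - m0 0 k| < delta) ->
     forall i a, `|r m1 i a - r m0 i a| < eps)
  (hbeta : 0 < beta < 1)
  (m : 'rV[R]_S) (hm : simplex m)
  (hirr : forall d : {ffun 'I_S -> 'I_A}, irreducible (Qpol (Q m) (det_mx d)))
  (V : 'cV[R]_S) (hV : is_value_fn beta (Q m) (r m) V) :
  (forall d, d \in opt_dets (Q m) (r m) V -> exists! x, stat_dist (Q m) d x) /\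
  (forall x : 'rV[R]_S, best_response (Q m) (r m) V x <->
     exists (c : {ffun {ffun 'I_S -> 'I_A} -> R}) (y : {ffun {ffun 'I_S -> 'I_A} -> 'rV[R]_S}),
       (forall d, 0 <= c d) /\ \sum_(d in opt_dets (Q m) (r m) V) c d = 1 /\
       (forall d, d \in opt_dets (Q m) (r m) V -> stat_dist (Q m) d (y d)) /\
       x = \sum_(d in opt_dets (Q m) (r m) V) c d *: y d).
Proof.
have Q_gen := hgen m hm.
have det_gen d : generator (Qpol (Q m) (det_mx d)).
  by apply: Qpol_generator => // i a; rewrite mxE.
have stat_exists d : exists x, stat_dist (Q m) d x.
  exact: generator_stationary_exists (ltnW hS) (det_gen d).
have stat_unique d x y : stat_dist (Q m) d x -> stat_dist (Q m) d y -> x = y.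
  move=> [x_simplex xQ0] [y_simplex yQ0].
  exact: irreducible_stationary_unique (det_gen d) (hirr d) x_simplex y_simplex xQ0 yQ0.
split=> [d _|x].
  have [x x_stat] := stat_exists d.
  by exists x; split=> // z; exact: stat_unique.
split.
  case=> x_simplex [pi [/in_conv_pol_prodP[pi_stoch pi_opt] xQ0]].
  have [y y_stat] : exists y : {ffun _ -> 'rV[R]_S}, forall d, stat_dist (Q m) d (y d).
    by have /fin_all_exists[y y_stat] := stat_exists; exists (finfun y) => d; rewrite ffunE.
  have [c [c_ge0 [c_sum1 x_def]]] :=
    stationary_in_hull Q_gen hirr (fun d _ => y_stat d) pi_stoch pi_opt x_simplex xQ0.
  by exists c, y.
case=> c [y [c_ge0 [c_sum1 [y_stat ->]]]].
have x_hull : in_hull (opt_dets (Q m) (r m) V) y (\sum_(d in opt_dets (Q m) (r m) V) c d *: y d).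
  by exists c.
split; first by apply: (in_hull_simplex _ x_hull) => d /y_stat[].
have [pi [pi_stoch pi_opt xQ0]] := in_hull_stationary Q_gen hirr y_stat x_hull.
by exists pi; split=> //; apply/in_conv_pol_prodP.
Qed.
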